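(* Consider the planning procedure described in the context, run at commit times $t_0<t_1<\cdots<t_k<\cdots$ over the mission horizon $[t_0,t_f]$, and let $p^{\Omega_{\mathrm{com}}}_k$ be the tube trajectory committed at $t_k$. Define the solution as the concatenation of committed tubes $p^\Omega_{\mathrm{sol}}=\{p^{\Omega_{\mathrm{com}}}_0,p^{\Omega_{\mathrm{com}}}_1,\dots,p^{\Omega_{\mathrm{com}}}_k,\dots\}$. Assume the cost of the initial backup satisfies $J^{\mathrm{back}}_0\le B$. If at each $t_k$ the valid pairs are generated, the budget-feasible set $\mathcal{F}^c_k$ is formed, the commitment rule is applied, and the system tracks each committed tube, then the solution is safe, i.e. its tube lies in $\mathcal{S}(t)$ for all $t\in[t_0,t_f]$, and $J(p^\Omega_{\mathrm{sol}})\le B$.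
   Context: System: $\dot x=f_0(x)+F(x)\theta_f+(g_0(x)+G(x)\theta_g)u+n_{\mathrm{add}}(t)$, $y=c(x)+n_{\mathrm{meas}}(t)$, with state $x\in\mathcal{X}\subset\mathbb{R}^n$, input $u\in\mathcal{U}$, unknown parameters $\theta=(\theta_f,\theta_g)$ in a known compact set $\Theta$, and bounded disturbances. The safe set is $\mathcal{S}(t)\subseteq\mathcal{X}$, the goal set $\mathcal{G}$, the budget $B$, and the mission cost $J(p_x,p_u)=\int_{t_0}^{t_f}\ell(p_x,p_u)\,dt+\ell_T(p_x(t_f))$. A trajectory $p=(p_x,p_u)$ on $[t_i,t_f]$ satisfies the nominal dynamics with fixed parameter estimates. A tube cross-section $\mathcal{E}(t)$ is a compact set containing the origin that bounds the deviation of the true state from $p_x(t)$ for all parameters in $\Theta$ and all admissible disturbances; the tube is $\Omega(t)=p_x(t)\oplus\mathcal{E}(t)$. A robust controlled-invariant (RCI) tube trajectory $p^\Omega=(p_x,p_u,\Omega)$ satisfies tightened constraints $p_x(t)\in\mathcal{S}\ominus\mathcal{E}(t)$, $p_u(t)\in\mathcal{U}\ominus\Delta U(t)$, $p_x(t_f)\in\mathcal{G}\ominus\mathcal{E}(t_f)$, and admits an ancillary controller $u=p_u+\pi(t,x,p^\Omega)$ such that $x(t_i)\in\Omega(t_i)$ implies $x(t)\in\Omega(t)$ for all $t$ and all parameters/disturbances. Procedure at each $t_k$: (1) compute a backup RCI tube trajectory $p^{\Omega_{\mathrm{bak}}}_k$ on $[t_k,t_f]$ with $\Omega^{\mathrm{bak}}_k(t)\subseteq\mathcal{S}(t)$,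 built from the current parameter set $\Theta^k$. (2) For horizons $T^{c,k}_i=iT_c$, $i=1,\dots,N_k$ with $N_k=\max\{i: t_k+iT_c\le t_f\}$, the conservative candidate $p^{\Omega_{\mathrm{cons}},i}_k$ is the backup restricted to $[t_k,t_k+T^{c,k}_i]$, and an informative candidate $p^{\mathrm{info},i}_k$ is a trajectory on this interval ending at $p^{\mathrm{cons},i}_{k,x}(t_k+T^{c,k}_i)$. The pair is valid if there is a tube $\Omega^{\mathrm{info},i}_k=p^{\mathrm{info},i}_{k,x}\oplus\mathcal{E}^{\mathrm{info},i}_k$ making $p^{\Omega_{\mathrm{info}},i}_k$ an RCI tube trajectory with $\Omega^{\mathrm{info},i}_k(t)\subseteq\mathcal{S}\ominus\mathcal{E}(t)$ and $p^{\mathrm{info},i}_{k,u}(t)\in\mathcal{U}\ominus\Delta U(t)$ on the horizon. (3) With $J^k_{\mathrm{exec}}$ the cost of the executed trajectory up to $t_k$, $J^k_{\mathrm{back}}$ the cost of the backup from $t_k$ to $t_f$, and $\Delta J_i=J(p^{\Omega_{\mathrm{info}},i}_k)-J(p^{\Omega_{\mathrm{cons}},i}_k)$, the feasible set is $\mathcal{F}^c_k=\{i:\text{pair }i\text{ valid},\ J^k_{\mathrm{exec}}+J^k_{\mathrm{back}}+\Delta J_i\le B\}$. (4) If $\mathcal{F}^c_k\neq\emptyset$, commit the informative tube of the pair maximizing the score $s^{c,k}_i=e^{-\lambda T^{c,k}_i}\Delta w_i$ ($\lambda>0$, $\Delta w_i$ the predicted reduction in average directional width of the parameter set); otherwise commit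 the conservative candidate with the smallest horizon. After execution the parameter set is updated by set-membership identification $\Theta^{k+1}=\Theta^k\cap\{\theta:|z(t)-\Phi(x(t),u(t))\theta|\le\overline w\}$ (so it is non-increasing and contains the true parameter), and the backup is recomputed. Standing assumptions: the executed trajectory equals the planned committed trajectory, measurements satisfy $z_j=\Phi_j\theta^\star+w_j$ with $\|w_j\|_\infty\le\overline w$; and tube cost is monotone under set inclusion: if $\Theta'\subseteq\Theta$, the RCI tube trajectory computed from $\Theta'$ on $[t_k,t_f]$ has cost no larger than the one computed from $\Theta$. *)

From HB Require Import structures.
From mathcomp Require Import all_boot all_order all_algebra.
From mathcomp Require Import all_classical all_reals all_analysis.
Set Implicit Arguments. Unset Strict Implicit. Unset Printing Implicit Defensive.
Import Order.TTheory GRing.Theory Num.Theory.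
Import numFieldNormedType.Exports.
Local Open Scope classical_set_scope.
Local Open Scope ring_scope.

Definition mink {V : zmodType} (a : V) (E : set V) : set V := [set a + e | e in E].
Definition pdiff {V : zmodType} (S E : set V) : set V := [set x | forall e, E e -> S (x + e)].

Section Defs.
Variables (R : realType) (n m qf qg r : nat).

Definition param := ('cV[R]_qf * 'cV[R]_qg)%type.

(* x' = f0(x) + F(x) th_f + (g0(x) + G(x) th_g) u + n_add,
   with G(x) th_g := \sum_j (th_g)_j G_j(x) *)
Record system := Sys {
  f0 : 'cV[R]_n -> 'cV[R]_n;
  Fm : 'cV[R]_n -> 'M[R]_(n, qf);
  g0 : 'cV[R]_n -> 'M[R]_(n, m);
  Gm : 'cV[R]_n -> 'I_qg -> 'M[R]_(n, m);
  Dadd : set 'cV[R]_n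
}.

Definition rhs (sys : system) (x : 'cV[R]_n) (th : param) (u : 'cV[R]_m)
  (d : 'cV[R]_n) : 'cV[R]_n :=
  f0 sys x + Fm sys x *m th.1
  + (g0 sys x + \sum_(j < qg) th.2 j 0 *: Gm sys x j) *m u + d.

Definition solves (sys : system) (th : param) (ctrl : R -> 'cV[R]_n -> 'cV[R]_m)
  (d : R -> 'cV[R]_n) (x : R -> 'cV[R]_n) (a b : R) : Prop :=
  {within `[a, b], continuous x} /\
  forall t, a < t < b ->
    derivable x t 1 /\ 'D_1 x t = rhs sys (x t) th (ctrl t (x t)) (d t).

Record tubetraj := TT {
  px : R -> 'cV[R]_n;
  pu : R -> 'cV[R]_m;
  tE : R -> set 'cV[R]_n
}.

Definition tube (p : tubetraj) (t : R) : set 'cV[R]_n := mink (px p t) (tE p t).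

Definition is_RCI (sys : system) (Th : set param) (S : R -> set 'cV[R]_n)
  (U : set 'cV[R]_m) (Gset : set 'cV[R]_n) (dU : R -> set 'cV[R]_m)
  (tf a b : R) (p : tubetraj) : Prop :=
  a <= b /\
  (forall t, a <= t <= b -> compact (tE p t) /\ tE p t 0) /\
  (exists thh, Th thh /\ solves sys thh (fun t _ => pu p t) (fun _ => 0) (px p) a b) /\
  (forall t, a <= t <= b -> pdiff (S t) (tE p t) (px p t) /\ pdiff U (dU t) (pu p t)) /\
  (b = tf -> pdiff Gset (tE p b) (px p b)) /\
  exists pi : R -> 'cV[R]_n -> 'cV[R]_m,
    (forall t x, a <= t <= b -> tube p t x -> dU t (pi t x)) /\
    forall (th : param) (d : R -> 'cV[R]_n) (x : R -> 'cV[R]_n),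
      Th th -> (forall t, Dadd sys (d t)) ->
      solves sys th (fun t y => pu p t + pi t y) d x a b ->
      tube p a (x a) -> forall t, a <= t <= b -> tube p t (x t).

Definition Jseg (ell : 'cV[R]_n -> 'cV[R]_m -> R) (ellT : 'cV[R]_n -> R) (tf : R)
  (p : tubetraj) (a b : R) : R :=
  Rintegral lebesgue_measure `[a, b] (fun t => ell (px p t) (pu p t))
  + (if b == tf then ellT (px p b) else 0).

Definition valid_pair (sys : system) (Th : set param) (S : R -> set 'cV[R]_n)
  (U : set 'cV[R]_m) (Gset : set 'cV[R]_n) (dU : R -> set 'cV[R]_m) (tf Tc tk : R)
  (bak info : tubetraj) (i : nat) : Prop :=
  let T := tk + i%:R * Tc in
  px info T = px bak T /\
  is_RCI sys Th S U Gset dU tf tk T info /\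
  (forall t, tk <= t <= T ->
     tube info t `<=` pdiff (S t) (tE info t) /\ pdiff U (dU t) (pu info t)).

Definition Jexec (ell : 'cV[R]_n -> 'cV[R]_m -> R) (ellT : 'cV[R]_n -> R) (tf : R)
  (tc : nat -> R) (com : nat -> tubetraj) (k : nat) : R :=
  \sum_(j < k) Jseg ell ellT tf (com j) (tc j) (tc j.+1).

Definition dJ (ell : 'cV[R]_n -> 'cV[R]_m -> R) (ellT : 'cV[R]_n -> R) (tf Tc tk : R)
  (bak info : tubetraj) (i : nat) : R :=
  Jseg ell ellT tf info tk (tk + i%:R * Tc) - Jseg ell ellT tf bak tk (tk + i%:R * Tc).

Definition score (lam Tc : R) (dw : R) (i : nat) : R := expR (- (lam * (i%:R * Tc))) * dw.

End Defs.

From HB Require Import structures.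
From mathcomp Require Import all_boot all_order all_algebra.
From mathcomp Require Import all_classical all_reals all_analysis.
From mathcomp Require Import lra.
Import Order.TTheory GRing.Theory Num.Theory.
Import numFieldNormedType.Exports.
Local Open Scope classical_set_scope.
Local Open Scope ring_scope.

Set Implicit Arguments.
Unset Strict Implicit.
Unset Printing Implicit Defensive.

(* The invariant is that the cost already executed
   plus the cost of the current backup stays within the budget B.  Committing
   an informative tube is allowed only when it keeps this sum below B, and
   committing the conservative candidate leaves the sum unchanged; in both
   cases what remains is the tail of the old backup, which costs at least the
   new backup because the parameter set only shrinks.  Safety holds piecewise:
   a backup tube lies in S by construction, and an informative tube lies in
   S (-) E, which is inside S because the cross-section E contains 0. *)

Lemma pdiff_sub (V : zmodType) (S E : set V) : E 0 -> pdiff S E `<=` S.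
Proof. by move=> E0 x /(_ 0 E0); rewrite addr0. Qed.

Lemma nondecreasing_cover d (T : orderType d) (f : nat -> T) (K : nat) (t : T) :
  (0 < K)%N -> (forall k, (k < K)%N -> (f k <= f k.+1)%O) ->
  (f 0%N <= t <= f K)%O -> exists2 k, (k < K)%N & (f k <= t <= f k.+1)%O.
Proof.
elim: K => // K IH _ f_mono /andP[f0_le_t t_le_fK].
have [t_le_fK' | fK_lt_t] := leP t (f K); last by exists K; rewrite // ltW.
case: K IH f_mono t_le_fK t_le_fK' => [|K] IH f_mono _ t_le_fK'.
  by exists 0%N; rewrite // f0_le_t (le_trans t_le_fK') ?f_mono.
have := IH isT (fun k lt_kK => f_mono k (ltnW lt_kK)).
rewrite f0_le_t t_le_fK' => /(_ isT) [k lt_kK fk_t].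
by exists k => //; apply: ltnW.
Qed.

Lemma budget_invariant (R : numDomainType) (B : R) (K : nat)
    (spent back rest : nat -> R) :
  (0 < K)%N -> spent 0%N + back 0%N <= B ->
  (forall k, (k < K)%N -> spent k + back k <= B -> spent k.+1 + rest k <= B) ->
  (forall k, (k.+1 < K)%N -> back k.+1 <= rest k) ->
  spent K + rest K.-1 <= B.
Proof.
move=> K_gt0 within0 step rest_ge.
have within k : (k < K)%N -> spent k + back k <= B.
  elim: k => // k IH lt_kK; have lt_kK' := ltnW lt_kK.
  by apply: le_trans (step k lt_kK' (IH lt_kK')); rewrite lerD2l rest_ge.
have lt_K1K : (K.-1 < K)%N by rewrite prednK.
by rewrite -{1}(prednK K_gt0) step ?within.
Qed.

Section MissionCost.
Variables (R : realType) (n m : nat).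
Variables (ell : 'cV[R]_n -> 'cV[R]_m -> R) (ellT : 'cV[R]_n -> R) (tf : R).

Lemma Jseg_itvB (p : tubetraj R n m) (a b c : R) :
  a <= b <= c -> b != tf ->
  lebesgue_measure.-integrable `[a, c] (fun t => (ell (px p t) (pu p t))%:E) ->
  Jseg ell ellT tf p a c - Jseg ell ellT tf p a b = Jseg ell ellT tf p b c.
Proof.
move=> /andP[a_le_b b_le_c] b_neq_tf int_ac.
have int_bc : lebesgue_measure.-integrable `]b, c]
    (fun t => (ell (px p t) (pu p t))%:E).
  by apply: integrableS int_ac => //; apply: subset_itvr; rewrite bnd_simp.
rewrite /Jseg (negPf b_neq_tf) addr0 addrAC (Rintegral_itvB int_ac) ?bnd_simp //.
by rewrite Rintegral_itv_obnd_cbnd.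
Qed.

End MissionCost.

Lemma valid_pair_tube_sub (R : realType) (n m qf qg : nat)
    (sys : system R n m qf qg) (Th : set (param R qf qg)) (S : R -> set 'cV[R]_n)
    (U : set 'cV[R]_m) (Gset : set 'cV[R]_n) (dU : R -> set 'cV[R]_m)
    (tf Tc tk : R) (bak info : tubetraj R n m) (i : nat) :
  valid_pair sys Th S U Gset dU tf Tc tk bak info i ->
  forall t, tk <= t <= tk + i%:R * Tc -> tube info t `<=` S t.
Proof.
rewrite /valid_pair => -[_ [[_ [E_compact_0 _]] info_tight]] t t_in x.
move=> /(proj1 (info_tight t t_in)); exact: pdiff_sub (proj2 (E_compact_0 t t_in)) x.
Qed.

Lemma commit_rule_cases (I T : Type) (F : set I) (P : Prop) (i0 ic : I)
    (c cons : T) (inf : I -> T) :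
  ((exists i, F i) -> [/\ F ic, P & c = inf ic]) /\
  (~ (exists i, F i) -> ic = i0 /\ c = cons) ->
  (F ic /\ c = inf ic) \/ (ic = i0 /\ c = cons).
Proof.
move=> [informative conservative]; have [/informative[]|] := pselect (exists i, F i).
  by left.
by right; apply: conservative.
Qed.

Section Commitment.
Variables (R : realType) (n m qf qg : nat) (sys : system R n m qf qg).
Variables (S : R -> set 'cV[R]_n) (U : set 'cV[R]_m) (Gset : set 'cV[R]_n).
Variables (dU : R -> set 'cV[R]_m).
Variables (ell : 'cV[R]_n -> 'cV[R]_m -> R) (ellT : 'cV[R]_n -> R) (tf B Tc : R).
Variables (tc : nat -> R) (Th : nat -> set (param R qf qg)).
Variables (bak com : nat -> tubetraj R n m) (info : nat -> nat -> tubetraj R n m).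
Variables (Nk ic : nat -> nat) (k : nat).

Definition budget_feasible : set nat :=
  [set i : nat | [/\ (1 <= i <= Nk k)%N,
     valid_pair sys (Th k) S U Gset dU tf Tc (tc k) (bak k) (info k i) i &
     Jexec ell ellT tf tc com k + Jseg ell ellT tf (bak k) (tc k) tf
     + dJ ell ellT tf Tc (tc k) (bak k) (info k i) i <= B]].

Hypothesis Tc_gt0 : 0 < Tc.
Hypothesis commit_choice :
  (budget_feasible (ic k) /\ com k = info k (ic k)) \/ (ic k = 1%N /\ com k = bak k).
Hypothesis next_commit_time : tc k.+1 = tc k + (ic k)%:R * Tc.

Lemma commit_time_lt : tc k < tc k.+1.
Proof.
have ic_gt0 : (0 < ic k)%N by case: commit_choice => [[[/andP[]]]|[->]].
by rewrite next_commit_time ltrDl mulr_gt0 ?ltr0n.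
Qed.

Lemma committed_tube_sub :
  (forall t, tc k <= t <= tc k.+1 -> tube (bak k) t `<=` S t) ->
  forall t, tc k <= t <= tc k.+1 -> tube (com k) t `<=` S t.
Proof.
case: commit_choice => [[[_ valid _] ->] _ | [_ ->] //].
by rewrite next_commit_time; apply: valid_pair_tube_sub valid.
Qed.

Lemma committed_budget_step :
  Jexec ell ellT tf tc com k + Jseg ell ellT tf (bak k) (tc k) tf <= B ->
  Jexec ell ellT tf tc com k.+1
  + (Jseg ell ellT tf (bak k) (tc k) tf - Jseg ell ellT tf (bak k) (tc k) (tc k.+1))
  <= B.
Proof.
rewrite [Jexec _ _ _ _ _ k.+1]/Jexec big_ord_recr /= -/(Jexec ell ellT tf tc com k).
case: commit_choice => [[[_ _ within] ->] _ | [_ ->] within]; last lra.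
by move: within; rewrite /dJ -next_commit_time; lra.
Qed.

End Commitment.

Theorem theorem1 (R : realType) (n m qf qg r : nat)
  (sys : system R n m qf qg)
  (S : R -> set 'cV[R]_n) (U : set 'cV[R]_m) (Gset : set 'cV[R]_n)
  (dU : R -> set 'cV[R]_m)
  (ell : 'cV[R]_n -> 'cV[R]_m -> R) (ellT : 'cV[R]_n -> R)
  (t0 tf B Tc lam wbar : R)
  (* set-membership identification data: z = Phi(x,u) theta* + w *)
  (Phif : 'cV[R]_n -> 'cV[R]_m -> 'M[R]_(r, qf))
  (Phig : 'cV[R]_n -> 'cV[R]_m -> 'M[R]_(r, qg))
  (z w : R -> 'cV[R]_r) (thstar : param R qf qg)
  (* true (executed) state and input *)
  (xtrue : R -> 'cV[R]_n) (utrue : R -> 'cV[R]_m)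
  (* the run of the procedure: commits k = 0, ..., K-1 at times tc k *)
  (K : nat) (tc : nat -> R) (Th : nat -> set (param R qf qg))
  (bak : nat -> tubetraj R n m) (info : nat -> nat -> tubetraj R n m)
  (dw : nat -> nat -> R) (Nk : nat -> nat) (ic : nat -> nat)
  (com : nat -> tubetraj R n m) :
  0 < Tc -> 0 < lam -> t0 < tf ->
  (0 < K)%N -> tc 0%N = t0 -> tc K = tf ->
  compact (Th 0%N) -> Th 0%N thstar ->
  (forall s, z s = Phif (xtrue s) (utrue s) *m thstar.1
                   + Phig (xtrue s) (utrue s) *m thstar.2 + w s
             /\ forall i, `|w s i 0| <= wbar) ->
  (* parameter-set update by set-membership identification *)
  (forall k, (k < K)%N ->
     Th k.+1 = Th k `&` [set th | forall s, tc k <= s <= tc k.+1 ->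
        forall i, `|z s i 0 - (Phif (xtrue s) (utrue s) *m th.1
                               + Phig (xtrue s) (utrue s) *m th.2) i 0| <= wbar]) ->
  (* backups: RCI tube trajectories on [t_k, t_f] built from Th k, inside S *)
  (forall k, (k < K)%N ->
     [/\ is_RCI sys (Th k) S U Gset dU tf (tc k) tf (bak k),
         forall t, tc k <= t <= tf -> tube (bak k) t `<=` S t,
         tube (bak k) (tc k) (xtrue (tc k)) &
         lebesgue_measure.-integrable `[tc k, tf]
           (fun t => (ell (px (bak k) t) (pu (bak k) t))%:E)]) ->
  (* N_k = max {i | t_k + i Tc <= t_f} *)
  (forall k, (k < K)%N ->
     (Nk k)%:R * Tc <= tf - tc k < (Nk k).+1%:R * Tc) ->
  (* monotonicity of the tube cost under set inclusion *)
  (forall k, (k.+1 < K)%N -> Th k.+1 `<=` Th k ->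
     Jseg ell ellT tf (bak k.+1) (tc k.+1) tf <= Jseg ell ellT tf (bak k) (tc k.+1) tf) ->
  (* initial backup within budget *)
  Jseg ell ellT tf (bak 0%N) (tc 0%N) tf <= B ->
  (* commitment rule, with F^c_k the budget-feasible set of valid pairs *)
  (forall k, (k < K)%N ->
     let F := [set i : nat | [/\ (1 <= i <= Nk k)%N,
                  valid_pair sys (Th k) S U Gset dU tf Tc (tc k) (bak k) (info k i) i &
                  Jexec ell ellT tf tc com k + Jseg ell ellT tf (bak k) (tc k) tf
                  + dJ ell ellT tf Tc (tc k) (bak k) (info k i) i <= B]] in
     ((exists i, F i) ->
        [/\ F (ic k),
            forall j, F j -> score lam Tc (dw k j) j <= score lam Tc (dw k (ic k)) (ic k) &
            com k = info k (ic k)]) /\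
     (~ (exists i, F i) -> ic k = 1%N /\ com k = bak k)) ->
  (* next commit time at the end of the committed horizon *)
  (forall k, (k < K)%N -> tc k.+1 = tc k + (ic k)%:R * Tc) ->
  (* the system tracks each committed tube *)
  (forall k, (k < K)%N -> forall t, tc k <= t <= tc k.+1 -> tube (com k) t (xtrue t)) ->
  [/\ (forall t, t0 <= t <= tf -> exists2 k, (k < K)%N & tc k <= t <= tc k.+1),
      (forall k, (k < K)%N -> forall t, tc k <= t <= tc k.+1 -> tube (com k) t `<=` S t) &
      \sum_(k < K) Jseg ell ellT tf (com k) (tc k) (tc k.+1) <= B].
Proof.
move=> Tc_gt0 _ _ K_gt0 tc0 tcK _ _ _ Th_update backup _ cost_mono back0_within
  rule next_time _.
have choice k (lt_kK : (k < K)%N) := commit_rule_cases (rule k lt_kK).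
have tc_lt k (lt_kK : (k < K)%N) : tc k < tc k.+1 :=
  commit_time_lt Tc_gt0 (choice k lt_kK) (next_time k lt_kK).
have tc_mono : {in [pred i | (i <= K)%N] &,
    {homo tc : i j / (i <= j)%N >-> i <= j}}.
  apply: homo_leq_in => [x | y x x' | i j _ | i _] //; first exact: le_trans.
    by rewrite !inE => le_jK l /andP[_ /ltnW /leq_trans]; apply.
  by rewrite inE => /tc_lt /ltW.
have tc_le_tf k : (k <= K)%N -> tc k <= tf.
  by move=> le_kK; rewrite -tcK tc_mono ?inE.
split.
- by move=> t; rewrite -tc0 -tcK; apply: nondecreasing_cover => // k /tc_lt /ltW.
- move=> k lt_kK; apply: committed_tube_sub (choice k lt_kK) (next_time k lt_kK) _.
  move=> t /andP[tk_le_t t_le_tk1]; have [_ bak_safe _ _] := backup k lt_kK.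
  by apply: bak_safe; rewrite tk_le_t (le_trans t_le_tk1) ?tc_le_tf.
- have := budget_invariant K_gt0 _
    (fun k lt_kK => committed_budget_step (choice k lt_kK) (next_time k lt_kK)) _.
  rewrite (prednK K_gt0) tcK subrr addr0; apply.
    by rewrite /Jexec big_ord0 add0r.
  move=> k lt_k1K; have lt_kK := ltnW lt_k1K; have [_ _ _ integrable] := backup k lt_kK.
  have tk1_lt_tf : tc k.+1 < tf := lt_le_trans (tc_lt _ lt_k1K) (tc_le_tf _ lt_k1K).
  rewrite Jseg_itvB ?(ltW (tc_lt k lt_kK)) ?(ltW tk1_lt_tf) ?(lt_eqF tk1_lt_tf) //.
  by apply: cost_mono; rewrite // Th_update // => th [].
Qed.
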